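(* Let $q$ be a prime power with $q>63$ and let $\mathbb D$ be a $3$-$(q+1,q-4,(q-4)(q-5)(q-6)/60)$ design. Then $\dim_q\mathbb D\ge 4$.
   Context: A $t$-$(v,k,\lambda)$ design is a set of $v$ points with a set of $k$-subsets (blocks) such that every $t$ points lie in exactly $\lambda>0$ blocks. The dimension $\dim_q\mathbb D$ of a design $\mathbb D$ over $\mathrm{GF}(q)$ is the minimum of the ranks over $\mathrm{GF}(q)$ of all matrices obtained from the $(0,1)$ block-by-point incidence matrix of $\mathbb D$ by replacing each entry $1$ with an arbitrary nonzero element of $\mathrm{GF}(q)$; equivalently, the minimum dimension of a linear code over $\mathrm{GF}(q)$ of length $v$ in which every block of $\mathbb D$ is the support of some codeword. *)

From mathcomp Require Import all_boot all_order all_algebra all_field.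
Set Implicit Arguments. Unset Strict Implicit. Unset Printing Implicit Defensive.
Import GRing.Theory.
Local Open Scope ring_scope.

Definition is_design (t v k lam : nat) (Bs : {set {set 'I_v}}) : Prop :=
  [/\ (forall B, B \in Bs -> #|B| = k),
      (0 < lam)%N &
      (forall T : {set 'I_v}, #|T| = t ->
         #|[set B in Bs | T \subset B]| = lam)].

Definition block (v : nat) (Bs : {set {set 'I_v}}) (i : 'I_#|Bs|) : {set 'I_v} :=
  @enum_val _ (mem Bs) i.

(* M is obtained from the block-by-point incidence matrix by replacing each
   entry 1 with an arbitrary nonzero element of F (and keeping 0s). *)
Definition incidence_like (F : fieldType) (v : nat) (Bs : {set {set 'I_v}})
  (M : 'M[F]_(#|Bs|, v)) : bool :=
  [forall i, forall j, (M i j != 0) == (j \in block i)].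

(* dim_q D: minimum rank over all such matrices (the set is nonempty:
   the incidence matrix itself qualifies; default v is an upper bound). *)
Definition dim_design (F : finFieldType) (v : nat) (Bs : {set {set 'I_v}}) : nat :=
  \big[minn/v]_(M : 'M[F]_(#|Bs|, v) | incidence_like M) \rank M.

(* Rows of a block-by-point matrix M with pairwise distinct nonempty supports
   cannot be nonzero multiples of one another, so the (q - 1) b vectors c M_i
   (c <> 0, M_i a row) are pairwise distinct and lie in the row space of M,
   which has q ^ rank M elements.  Counting flags gives 60 b = (q + 1) q (q - 1)
   for the number b of blocks, and q ^ 3 < (q - 1) b as soon as q > 63. *)

From mathcomp Require Import all_boot all_order all_algebra all_field.
From mathcomp Require Import zify.
Set Implicit Arguments. Unset Strict Implicit. Unset Printing Implicit Defensive.
Import GRing.Theory.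

Lemma design_card_blocks t v k lam (Bs : {set {set 'I_v}}) :
  is_design t k lam Bs -> (#|Bs| * 'C(k, t) = lam * 'C(v, t))%N.
Proof.
case=> cardB _ cardT.
pose flag (B T : {set 'I_v}) : nat := T \subset B.
have count_by_blocks :
    (\sum_(B in Bs) \sum_(T : {set 'I_v} | #|T| == t) flag B T
       = #|Bs| * 'C(k, t))%N.
  rewrite -sum1_card big_distrl /=; apply: eq_bigr => B /cardB <-.
  rewrite mul1n -cards_draws -sum1dep_card big_mkcond [in RHS]big_mkcond /=.
  by apply: eq_bigr => T _; rewrite /flag; case: (T \subset B); case: (#|T| == t).
have count_by_tsets :
    (\sum_(T : {set 'I_v} | #|T| == t) \sum_(B in Bs) flag B T
       = lam * 'C(v, t))%N.
  rewrite -[v in 'C(v, _)]card_ord -card_draws -sum1dep_card big_distrr /=.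
  apply: eq_bigr => T /eqP /cardT <-.
  rewrite muln1 -sum1dep_card big_mkcond [in RHS]big_mkcond /=.
  by apply: eq_bigr => B _; rewrite /flag; case: (T \subset B); case: (B \in Bs).
by rewrite -count_by_blocks -count_by_tsets exchange_big.
Qed.

Local Open Scope ring_scope.

Lemma card_le_rowspace (F : finFieldType) m n (M : 'M[F]_(m, n))
    (A : {set 'rV[F]_n}) :
  {in A, forall u, (u <= M)%MS} -> (#|A| <= #|F| ^ \rank M)%N.
Proof.
move=> sAM.
pose coord (u : 'rV_n) := u *m pinvmx (row_base M).
have coordK u : u \in A -> coord u *m row_base M = u.
  by move=> /sAM uM; rewrite mulmxKpV // eq_row_base.
have coord_inj : {in A &, injective coord}.
  by move=> u w uA wA eq_uw; rewrite -(coordK u uA) -(coordK w wA) eq_uw.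
rewrite -(card_in_imset coord_inj); apply: leq_trans (max_card _) _.
by rewrite card_mx mul1n.
Qed.

Section IncidenceLike.

Variables (F : finFieldType) (v : nat) (Bs : {set {set 'I_v}}).
Variable M : 'M[F]_(#|Bs|, v).
Hypothesis incM : incidence_like M.
Hypothesis block_neq0 : forall i, @block v Bs i != set0.

Lemma incidence_likeP i j : (M i j != 0) = (j \in block i).
Proof. by move/forallP/(_ i)/forallP/(_ j)/eqP: incM. Qed.

Lemma scaled_rows_inj :
  {in setX [set~ 0] [set: 'I_#|Bs|] &,
    injective (fun p : F * 'I_#|Bs| => p.1 *: row p.2 M)}.
Proof.
move=> [c i] [d j]; rewrite !inE !andbT /= => c_neq0 d_neq0 eq_rows.
have eq_entries x : c * M i x = d * M j x.
  by have := congr1 (fun u : 'rV_v => u 0 x) eq_rows; rewrite !mxE.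
have eq_ij : i = j.
  suff : block i = block j by apply: enum_val_inj.
  apply/setP => x; rewrite -!incidence_likeP.
  have : (c * M i x != 0) = (d * M j x != 0) by rewrite eq_entries.
  by rewrite !mulf_eq0 (negbTE c_neq0) (negbTE d_neq0).
subst j; congr pair.
have [x xBi] := set0Pn _ (block_neq0 i).
by apply: (mulIf _ (eq_entries x)); rewrite incidence_likeP.
Qed.

Lemma incidence_rank_bound : ((#|F| - 1) * #|Bs| <= #|F| ^ \rank M)%N.
Proof.
pose scaled_rows := [set p.1 *: row p.2 M | p in setX [set~ 0] [set: 'I_#|Bs|]].
have -> : ((#|F| - 1) * #|Bs| = #|scaled_rows|)%N.
  by rewrite card_in_imset ?cardsX ?cardsT ?cardsC1 ?card_ord ?subn1 //;
    exact: scaled_rows_inj.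
apply: card_le_rowspace => _ /imsetP[[c i] _ ->].
by rewrite scalemx_sub ?row_sub.
Qed.

End IncidenceLike.

Lemma dim_design_ge (F : finFieldType) v (Bs : {set {set 'I_v}}) r :
  (r <= v)%N -> (forall M : 'M[F]_(#|Bs|, v), incidence_like M -> r <= \rank M)%N ->
  (r <= dim_design F Bs)%N.
Proof.
move=> le_rv le_r_rank; apply: (big_ind (fun x => r <= x)%N) => //.
by move=> x y le_rx le_ry; rewrite leq_min le_rx le_ry.
Qed.

Local Close Scope ring_scope.

Lemma bin3_mul6 n : 'C(n, 3) * 6 = n * (n - 1) * (n - 2).
Proof.
rewrite -[6]/(3`!) bin_ffact !ffactnS ffactn0.
by case: n => [|[|[|n]]] //=; lia.
Qed.

Lemma card_blocks_eq q b lam : 0 < lam ->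
  60 * lam = (q - 4) * (q - 5) * (q - 6) ->
  b * 'C(q - 4, 3) = lam * 'C(q.+1, 3) ->
  60 * b = (q + 1) * q * (q - 1).
Proof.
move=> lam_gt0 lamE countE.
have binE : 'C(q - 4, 3) = 10 * lam.
  by have := bin3_mul6 (q - 4); rewrite -!subnDA; lia.
apply/eqP; rewrite -(eqn_pmul2l lam_gt0); apply/eqP.
have -> : lam * (60 * b) = 6 * (b * 'C(q - 4, 3)) by rewrite binE; lia.
by rewrite countE mulnCA [6 * _]mulnC bin3_mul6 !subSS subn0 addn1.
Qed.

Lemma cube_lt_blocks q b : 63 < q -> 60 * b = (q + 1) * q * (q - 1) ->
  q ^ 3 < (q - 1) * b.
Proof.
move=> q_gt63 bE; rewrite -(ltn_pmul2l (isT : 0 < 60)) mulnCA bE.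
have [p ->] : exists p, q = p + 64 by exists (q - 64); lia.
have -> : p + 64 - 1 = p + 63 by lia.
rewrite !expnS expn0 muln1; nia.
Qed.

Theorem theorem30 (F : finFieldType) (lam : nat)
  (Bs : {set {set 'I_(#|F|.+1)}}) :
  (63 < #|F|)%N ->
  (60 * lam = (#|F| - 4) * (#|F| - 5) * (#|F| - 6))%N ->
  @is_design 3 (#|F|.+1) (#|F| - 4) lam Bs ->
  (4 <= dim_design F Bs)%N.
Proof.
move=> q_gt63 lamE design.
have [cardB lam_gt0 _] := design.
have blocksE := card_blocks_eq lam_gt0 lamE (design_card_blocks design).
have block_neq0 i : @block _ Bs i != set0.
  by rewrite -card_gt0 (cardB _ (enum_valP i)); lia.
apply: dim_design_ge => [|M incM]; first lia.
have := leq_trans (cube_lt_blocks q_gt63 blocksE)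
  (incidence_rank_bound incM block_neq0).
by rewrite ltn_exp2l //; lia.
Qed.
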